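(* Assume $\Theta_0$ and $\Theta_1$ are nonempty. For $\theta_0\in\Theta_0$, $\theta_1\in\Theta_1$ and $\pi_0\in[0,1]$ let $Q_{\pi_0}=\pi_0\,\delta_{\theta_0}+(1-\pi_0)\,\delta_{\theta_1}$. A menu $\mathcal{F}\subseteq\bar{\mathcal{F}}$ satisfies $\liminf_{\pi_0\to 1^-} U(Q_{\pi_0},\mathcal{F})\ge 0$ for all $\theta_0\in\Theta_0$ and all $\theta_1\in\Theta_1$ if and only if $\mathcal{F}$ is incentive-aligned.
   Context: Let $\Theta$ be a set of types partitioned as $\Theta=\Theta_0\sqcup\Theta_1$ (null and nonnull types), and let $(P_\theta)_{\theta\in\Theta}$ be probability distributions on a measurable space $\mathcal{Z}$; $\mathbb{E}_\theta$ denotes expectation with $Z\sim P_\theta$. Fix a cost $C>0$. Fix an ambient class $\bar{\mathcal{F}}$ of measurable functions $f:\mathcal{Z}\to[0,\infty)$ (''license functions'') with $\mathbb{E}_\theta[f(Z)]<\infty$ for all $\theta$. A menu is a subset $\mathcal{F}\subseteq\bar{\mathcal{F}}$; it is assumed (attainment assumption) that for every $\theta$, $\sup_{f\in\mathcal{F}}\mathbb{E}_\theta[f(Z)]$ is attained when $\mathcal{F}\ne\emptyset$. Agent behavior: an agent of type $\theta$ offered $\mathcal{F}$ opts in ($I=1$) iff $\mathcal{F}\neq\emptyset$ and $\max_{f\in\mathcal{F}}\mathbb{E}_\theta[f(Z)]>C$, in which case it selects some maximizer $f^{\mathrm{br}}(\cdot;\theta,\mathcal{F})\in\arg\max_{f\in\mathcal{F}}\mathbb{E}_\theta[f(Z)]$;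 otherwise it opts out ($I=0$). The realized license is $L=f^{\mathrm{br}}(Z;\theta,\mathcal{F})$ with $Z\sim P_\theta$. The principal's utility is a function $u:\Theta\times[0,\infty)\to\mathbb{R}$ such that: for $\theta\in\Theta_1$, $u(\theta,\cdot)$ is nondecreasing and $0\le u(\theta,L)\le a_1$ for some constant $a_1<\infty$; for $\theta\in\Theta_0$, $u(\theta,\cdot)$ is nonincreasing, $u(\theta,0)\le 0$ and $u(\theta,L)<0$ for all $L>0$. For a probability distribution $Q$ on $\Theta$, the principal's expected utility is $U(Q,\mathcal{F})=\mathbb{E}_{\theta\sim Q}\big[\mathbb{E}_{Z\sim P_\theta}[u(\theta,L)\cdot I\mid\theta]\big]$. A menu $\mathcal{F}$ is incentive-aligned if $\mathbb{E}_\theta[f(Z)]\le C$ for all $\theta\in\Theta_0$ and all $f\in\mathcal{F}$. *)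

From HB Require Import structures.
From mathcomp Require Import all_boot all_order all_algebra.
From mathcomp Require Import all_classical all_reals all_analysis.
Set Implicit Arguments. Unset Strict Implicit. Unset Printing Implicit Defensive.
Import Order.TTheory GRing.Theory Num.Theory.
Local Open Scope classical_set_scope.
Local Open Scope ring_scope.

Definition expect {d} {Z : measurableType d} {R : realType}
  (P : probability Z R) (f : Z -> R) : \bar R :=
  (\int[P]_z (f z)%:E)%E.

(* Opt-in decision of an agent of type theta offered menu F, given its
   selected best response br theta : opt in iff F nonempty and
   max_{f in F} E_theta[f] (= E_theta[br theta]) > C. *)
Definition opt_in {d} {Z : measurableType d} {R : realType} {Theta : Type}
  (P : Theta -> probability Z R) (C : R) (F : set (Z -> R))
  (br : Theta -> Z -> R) (th : Theta) : Prop :=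
  F !=set0 /\ (C%:E < expect (P th) (br th))%E.

Definition cond_util {d} {Z : measurableType d} {R : realType} {Theta : Type}
  (P : Theta -> probability Z R) (C : R) (F : set (Z -> R))
  (br : Theta -> Z -> R) (u : Theta -> R -> R) (th : Theta) : \bar R :=
  (\int[P th]_z (u th (br th z) * (asbool (opt_in P C F br th))%:R)%:E)%E.

Definition U_two {d} {Z : measurableType d} {R : realType} {Theta : Type}
  (P : Theta -> probability Z R) (C : R) (F : set (Z -> R))
  (br : Theta -> Z -> R) (u : Theta -> R -> R) (th0 th1 : Theta)
  (pi0 : R) : \bar R :=
  (pi0%:E * cond_util P C F br u th0 + (1 - pi0)%:E * cond_util P C F br u th1)%E.

(* liminf_{x -> a^-} g x, where g is only considered on [0,1]
   (the domain of pi0):  sup_{delta > 0} inf_{x in [0,1], a - delta < x < a} g x *)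
Definition liminf_left01 {R : realType} (g : R -> \bar R) (a : R) : \bar R :=
  ereal_sup [set ereal_inf (g @` [set x | 0 <= x <= 1 /\ a - e < x < a])
            | e in [set e : R | 0 < e]].

Definition incentive_aligned {d} {Z : measurableType d} {R : realType}
  {Theta : Type} (P : Theta -> probability Z R) (null : Theta -> Prop)
  (C : R) (F : set (Z -> R)) : Prop :=
  forall th f, null th -> F f -> (expect (P th) f <= C%:E)%E.

(** If null types are incentive-aligned, they opt out, so [U(Q_pi0)] is
    [(1 - pi0)] times the nonnegative utility of the nonnull type.
    Conversely, a null type that opts in with [E[f(Z)] > C] holds a license of
    size at least [C] with positive probability, where its utility is at most
    [u(C) < 0]; hence its conditional utility is some [a < 0], and
    [U(Q_pi0) <= pi0 a + (1 - pi0) a1] stays below [a / 2] as [pi0 -> 1]. *)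
From HB Require Import structures.
From mathcomp Require Import all_boot all_order all_algebra.
From mathcomp Require Import measurable_realfun.
From mathcomp Require Import ring lra.
From mathcomp Require Import all_classical all_reals all_analysis.
Set Implicit Arguments. Unset Strict Implicit. Unset Printing Implicit Defensive.
Import Order.TTheory GRing.Theory Num.Theory.
Local Open Scope classical_set_scope.
Local Open Scope ring_scope.

Section monotone_composition.
Context (R : realType) (d : measure_display) (Z : measurableType d).
Variable g : Z -> R.
Hypotheses (mg : measurable_fun setT g) (g_ge0 : forall z, 0 <= g z).

(* Composing with [max 0] extends [v] to a monotone function on all of [R]. *)
Lemma measurable_nondecreasing_comp (v : R -> R) :
  (forall x y, 0 <= x -> x <= y -> v x <= v y) ->
  measurable_fun setT (fun z => v (g z)).
Proof.
move=> v_homo.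
have -> : (fun z => v (g z)) = (fun x => v (Num.max 0 x)) \o g.
  by apply/funext => z /=; rewrite max_r.
apply: measurableT_comp => //; apply: nondecreasing_measurable => // x y xy.
apply: v_homo; first by rewrite le_max lexx.
by rewrite ge_max le_max lexx /= (le_trans xy) ?le_max ?lexx ?orbT.
Qed.

Lemma measurable_nonincreasing_comp (v : R -> R) :
  (forall x y, 0 <= x -> x <= y -> v y <= v x) ->
  measurable_fun setT (fun z => v (g z)).
Proof.
move=> v_homo.
have -> : (fun z => v (g z)) = (fun z => - (- v (g z))).
  by apply/funext => z; rewrite opprK.
apply: measurable_funN; apply: (@measurable_nondecreasing_comp (fun x => - v x)).
by move=> x y x0 xy; rewrite lerN2 v_homo.
Qed.

End monotone_composition.

Lemma measurable_superlevel (R : realType) (d : measure_display)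
    (Z : measurableType d) (g : Z -> R) (C : R) :
  measurable_fun setT g -> measurable [set z | C <= g z].
Proof.
move=> mg; have := mg measurableT _ (measurable_itv `[C, +oo[).
by rewrite setTI; congr measurable; apply/seteqP; split => z /=;
  rewrite in_itv /= andbT.
Qed.

Section integral_bounds.
Context (R : realType) (d : measure_display) (Z : measurableType d).
Local Open Scope ereal_scope.

Lemma probability_integral_le_cst (P : probability Z R) (f : Z -> R) (a : R) :
  measurable_fun setT f -> (forall z, (0 <= f z <= a)%R) ->
  \int[P]_z (f z)%:E <= a%:E.
Proof.
move=> mf fa; have a0 : (0 <= a)%R by case/andP: (fa point) => /le_trans; apply.
apply: (@le_trans _ _ (\int[P]_z (cst a%:E) z)).
  apply: ge0_le_integral => //.
  - by move=> z _; rewrite lee_fin (andP (fa z)).1.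
  - exact/measurable_EFinP.
  - by move=> z _; rewrite lee_fin (andP (fa z)).2.
rewrite integral_cst // -[leRHS]mule1.
by apply: lee_wpmul2l; [rewrite lee_fin | exact: probability_le1].
Qed.

(* Contrapositive of: if [g < C] almost surely then [E[g] <= C]. *)
Lemma superlevel_set_gt0 (P : probability Z R) (g : Z -> R) (C : R) :
  measurable_fun setT g -> (forall z, (0 <= g z)%R) -> (0 <= C)%R ->
  C%:E < \int[P]_z (g z)%:E -> 0 < P [set z | C <= g z]%R.
Proof.
move=> mg g0 C0 Cg; set A := [set z | C <= g z]%R.
have mA : measurable A by exact: measurable_superlevel.
rewrite lt0e measure_ge0 andbT; apply/negP => /eqP PA0.
move: Cg; apply/negP; rewrite -leNgt.
apply: (@le_trans _ _ (\int[P]_z (cst C%:E) z)); last first.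
  rewrite integral_cst // -[leRHS]mule1.
  by apply: lee_wpmul2l; [rewrite lee_fin | exact: probability_le1].
apply: ae_ge0_le_integral => //.
- by move=> z _; rewrite lee_fin.
- exact/measurable_EFinP.
- exists A; split => // z /= gzC; apply: ltW; rewrite ltNge.
  by apply/negP => Cz; apply: gzC => _; rewrite lee_fin.
Qed.

Lemma integral_nonincreasing_comp_le (mu : {measure set Z -> \bar R})
    (g : Z -> R) (v : R -> R) (C : R) :
  measurable_fun setT g -> (forall z, (0 <= g z)%R) ->
  (forall x y, (0 <= x -> x <= y -> v y <= v x)%R) -> (v 0 <= 0)%R ->
  (0 <= C)%R ->
  \int[mu]_z (v (g z))%:E <= (v C)%:E * mu [set z | C <= g z]%R.
Proof.
move=> mg g0 v_homo v00 C0; set A := [set z | C <= g z]%R.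
have mA : measurable A by exact: measurable_superlevel.
have Nvg_ge0 z : (0 <= - v (g z))%R.
  by rewrite oppr_ge0 (le_trans _ v00) ?v_homo.
have mNvg : measurable_fun setT (fun z => - v (g z))%R.
  exact/measurable_funN/measurable_nonincreasing_comp.
under eq_integral do rewrite -[v _]opprK EFinN.
rewrite integral_ge0N; last by move=> z _; rewrite lee_fin Nvg_ge0.
rewrite -[v C]opprK EFinN mulNe leeN2 -integral_cst //.
apply: (@le_trans _ _ (\int[mu]_(z in A) (- v (g z))%:E)).
  apply: ge0_le_integral => //.
  - by move=> z _; rewrite lee_fin oppr_ge0 (le_trans _ v00) ?v_homo.
  - exact/measurable_EFinP/(measurable_funS measurableT (@subsetT _ A) mNvg).
  - by move=> z Az; rewrite lee_fin lerN2 v_homo.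
apply: ge0_subset_integral => //; first exact/measurable_EFinP.
by move=> z _; rewrite lee_fin Nvg_ge0.
Qed.

End integral_bounds.

Section conditional_utility.
Context (R : realType) (d : measure_display) (Z : measurableType d).
Context (Theta : Type) (P : Theta -> probability Z R) (C : R).
Variables (F : set (Z -> R)) (br : Theta -> Z -> R) (u : Theta -> R -> R).
Local Notation opt_in := (opt_in P C F br).
Local Notation cond_util := (cond_util P C F br u).
Local Open Scope ereal_scope.

Lemma cond_util_opt_out th : ~ opt_in th -> cond_util th = 0.
Proof.
move=> out; rewrite /cond_util (asboolF out).
by apply: integral0_eq => z _; rewrite mulr0.
Qed.

Lemma cond_util_opt_in th :
  opt_in th -> cond_util th = \int[P th]_z (u th (br th z))%:E.
Proof.
by move=> inn; rewrite /cond_util (asboolT inn); under eq_integral do rewrite mulr1.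
Qed.

Lemma cond_util_ge0 th :
  (opt_in th -> forall z, (0 <= u th (br th z))%R) -> 0 <= cond_util th.
Proof.
move=> u_ge0; have [inn|out] := pselect (opt_in th); last first.
  by rewrite cond_util_opt_out.
by rewrite cond_util_opt_in //; apply: integral_ge0 => z _; rewrite lee_fin u_ge0.
Qed.

Lemma cond_util_le_cst th (a : R) :
  measurable_fun setT (fun z => u th (br th z)) ->
  (forall z, (0 <= u th (br th z) <= a)%R) -> cond_util th <= a%:E.
Proof.
move=> mu_br u_br; have [inn|out] := pselect (opt_in th); last first.
  by rewrite cond_util_opt_out // lee_fin; case/andP: (u_br point) => /le_trans; apply.
by rewrite cond_util_opt_in //; exact: probability_integral_le_cst.
Qed.

(* The bound is [u(C)] times the probability of a license of size at least
   [C], which is positive because the null type opts in. *)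
Lemma cond_util_lt0 th :
  (0 < C)%R -> opt_in th ->
  measurable_fun setT (br th) -> (forall z, (0 <= br th z)%R) ->
  (forall x y, (0 <= x -> x <= y -> u th y <= u th x)%R) -> (u th 0 <= 0)%R ->
  (forall L, (0 < L -> u th L < 0)%R) ->
  exists2 a : R, (a < 0)%R & cond_util th <= a%:E.
Proof.
move=> C0 inn mbr br0 u_homo u00 u_lt0; set A := [set z | C <= br th z]%R.
have mA : measurable A by exact: measurable_superlevel.
have PA_gt0 : 0 < P th A by apply: superlevel_set_gt0 => //; [exact: ltW | case: inn].
have PA_fin : P th A \is a fin_num.
  by rewrite ge0_fin_numE ?measure_ge0 // (le_lt_trans (probability_le1 _ mA)) ?ltey.
exists (u th C * fine (P th A))%R.
  by rewrite nmulr_rlt0 ?u_lt0 // fine_gt0 // PA_gt0 ltey_eq PA_fin.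
rewrite cond_util_opt_in // EFinM (fineK PA_fin).
by apply: integral_nonincreasing_comp_le => //; exact: ltW.
Qed.

Lemma U_two_ge0 th0 th1 x :
  (0 <= x <= 1)%R -> 0 <= cond_util th0 -> 0 <= cond_util th1 ->
  0 <= U_two P C F br u th0 th1 x.
Proof.
move=> /andP[x0 x1] u0 u1.
by rewrite /U_two adde_ge0 // mule_ge0 // lee_fin subr_ge0.
Qed.

Lemma U_two_le th0 th1 (a b x : R) :
  (0 <= x <= 1)%R -> cond_util th0 <= a%:E -> cond_util th1 <= b%:E ->
  U_two P C F br u th0 th1 x <= (x * a + (1 - x) * b)%:E.
Proof.
move=> /andP[x0 x1] u0 u1; rewrite /U_two [leRHS]EFinD !EFinM.
by apply: leeD; apply: lee_wpmul2l => //; rewrite lee_fin // subr_ge0.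
Qed.

End conditional_utility.

Section liminf_left01_bounds.
Context (R : realType).
Local Open Scope ereal_scope.

Lemma liminf_left01_ge0 (g : R -> \bar R) :
  (forall x, (0 <= x <= 1)%R -> 0 <= g x) -> 0 <= liminf_left01 g 1.
Proof.
move=> g_ge0; apply: le_trans (ereal_sup_ubound _); last by exists 1%R; rewrite /= ?ltr01.
by apply: le_ereal_inf_tmp => _ [x [x01 _] <-]; exact: g_ge0.
Qed.

(* [t] is chosen so that the affine bound is at most [3 a / 4] at every
   [x = 1 - m / 2] with [0 < m <= t]; such points lie in every left
   neighbourhood of [1]. *)
Lemma liminf_left01_lt0 (g : R -> \bar R) (a b : R) :
  (a < 0)%R -> (0 <= b)%R ->
  (forall x, (0 <= x <= 1)%R -> g x <= (x * a + (1 - x) * b)%:E) ->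
  liminf_left01 g 1 < 0.
Proof.
move=> a_lt0 b_ge0 g_le; apply: (@le_lt_trans _ _ (a / 2)%:E); last first.
  by rewrite lte_fin; lra.
apply: ge_ereal_sup => _ [e /= e_gt0 <-].
pose t := (- a / (2 * (b - a)))%R.
have t_gt0 : (0 < t)%R by rewrite divr_gt0 //; lra.
have tba : (t * (b - a) = - a / 2)%R by rewrite /t; field; lra.
pose m := Num.min e t.
have [m_gt0 m_le_e m_le_t] : [/\ 0 < m, m <= e & m <= t]%R.
  by rewrite lt_min e_gt0 t_gt0 !ge_min !lexx ?orbT.
have t_le : (t <= 1 / 2)%R by nra.
have x01 : (0 <= 1 - m / 2 <= 1)%R by apply/andP; split; lra.
apply: le_trans (ereal_inf_lbound _) _.
  by exists (1 - m / 2)%R => //; split => //; apply/andP; split; lra.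
apply: le_trans (g_le _ x01) _; rewrite lee_fin.
have : (m / 2 * (b - a) <= t / 2 * (b - a))%R by apply: ler_wpM2r; lra.
lra.
Qed.

End liminf_left01_bounds.

Theorem proposition2p3 (R : realType) (d : measure_display) (Z : measurableType d)
  (Theta : Type) (null : Theta -> Prop) (P : Theta -> probability Z R)
  (C : R) (hC : 0 < C)
  (Fbar : set (Z -> R))
  (hFbar : forall f, Fbar f ->
     [/\ measurable_fun setT f, (forall z, 0 <= f z)
       & forall th, (P th).-integrable setT (fun z => (f z)%:E)])
  (u : Theta -> R -> R) (a1 : R)
  (hu1 : forall th, ~ null th ->
     (forall x y, 0 <= x -> x <= y -> u th x <= u th y) /\
     (forall L, 0 <= L -> 0 <= u th L <= a1))
  (hu0 : forall th, null th ->
     [/\ (forall x y, 0 <= x -> x <= y -> u th y <= u th x),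
         u th 0 <= 0
       & forall L, 0 < L -> u th L < 0])
  (hTh0 : exists th, null th) (hTh1 : exists th, ~ null th)
  (F : set (Z -> R)) (hF : F `<=` Fbar)
  (br : Theta -> Z -> R)
  (hbr : F !=set0 -> forall th,
     F (br th) /\ forall f, F f -> (expect (P th) f <= expect (P th) (br th))%E) :
  (forall th0 th1, null th0 -> ~ null th1 ->
     (0 <= liminf_left01 (U_two P C F br u th0 th1) 1)%E)
  <-> incentive_aligned P null C F.
Proof.
have br_spec : F !=set0 -> forall th,
    measurable_fun setT (br th) /\ forall z, 0 <= br th z.
  by move=> Fn th; have [mbr br0 _] := hFbar _ (hF _ (hbr Fn th).1).
have a1_ge0 : 0 <= a1.
  by have [th1 /hu1[_ /(_ 0 (lexx 0)) /andP[/le_trans]]] := hTh1; apply.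
split => [limU_ge0 th f th_null Ff | IA th0 th1 th0_null th1_nonnull].
- rewrite leNgt; apply/negP => Cf; have Fn : F !=set0 by exists f.
  have [th1 th1_nonnull] := hTh1.
  have [u_homo u00 u_lt0] := hu0 _ th_null.
  have [mbr br0] := br_spec Fn th.
  have th_in : opt_in P C F br th.
    by split => //; exact: lt_le_trans Cf ((hbr Fn th).2 _ Ff).
  have [a a_lt0 util_th] := cond_util_lt0 hC th_in mbr br0 u_homo u00 u_lt0.
  have [u1_homo u1_bound] := hu1 _ th1_nonnull.
  have [mbr1 br10] := br_spec Fn th1.
  have util_th1 : (cond_util P C F br u th1 <= a1%:E)%E.
    apply: cond_util_le_cst; first exact: measurable_nondecreasing_comp.
    by move=> z; exact: u1_bound.
  have := limU_ge0 th th1 th_null th1_nonnull; apply/negP; rewrite -ltNge.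
  by apply: (liminf_left01_lt0 a_lt0 a1_ge0) => x x01; exact: U_two_le.
- apply: liminf_left01_ge0 => x x01; apply: U_two_ge0 => //.
    rewrite cond_util_opt_out // => -[Fn]; rewrite ltNge IA //.
    exact: (hbr Fn th0).1.
  apply: cond_util_ge0 => -[Fn _] z; have [_ br0] := br_spec Fn th1.
  by case/andP: ((hu1 _ th1_nonnull).2 _ (br0 z)).
Qed.
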